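(* Let $(M,g_{\mu\nu})$ be a four-dimensional spacetime, let $T_{\mu\nu}$ be a given stress-energy tensor on $M$, let $\kappa=8\pi G/c^{4}$ and let $\Lambda\in\mathbb{R}$. Suppose $g_{\mu\nu}$ is a solution of Einstein's field equations $$R_{\mu\nu}-\tfrac12 R g_{\mu\nu}+\Lambda g_{\mu\nu}=\kappa T_{\mu\nu}$$ whose Ricci scalar $R=g^{\mu\nu}R_{\mu\nu}$ is equal to a constant $k$, and let $f$ be a differentiable real function. Then: (i) If $f'(k)\neq 0$, then $g_{\mu\nu}$ is a solution of the $f(R)$ field equations $f'(k)R_{\mu\nu}-\tfrac12 f(k)g_{\mu\nu}=\kappa T_{\mu\nu}$ if and only if $$\Big[\big(\tfrac{k}{2}-\Lambda\big)f'(k)-\tfrac12 f(k)\Big]g_{\mu\nu}+\big(f'(k)-1\big)\kappa T_{\mu\nu}=0.$$ (ii) If $f'(k)=0$ and $f(k)\neq \frac{k-4\Lambda}{2}$, then $g_{\mu\nu}$ is not a solution of the $f(R)$ field equations (so, for the given $T_{\mu\nu}$, GR and the $f(R)$ theory have no common solution with constant Ricci scalar $k$). (iii) If $f'(k)=0$ and $f(k)=\frac{k-4\Lambda}{2}$, then $g_{\mu\nu}$ is a solution of the $f(R)$ field equations whenever $g_{\mu\nu}$ has vanishing Ricci tensor or $g_{\mu\nu}$ is a vacuum solution ($T_{\mu\nu}=0$).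
   Context: $R_{\mu\nu}$ denotes the Ricci tensor of $g_{\mu\nu}$, $\nabla_\mu$ its Levi-Civita covariant derivative and $\square=g^{\mu\nu}\nabla_\mu\nabla_\nu$. For a differentiable function $f$, the $f(R)$ field equations (obtained by varying $\frac{1}{2\kappa}\int\sqrt{-g}\,f(R)\,d^4x+S_m$) are $$f'(R)R_{\mu\nu}-\tfrac12 f(R)g_{\mu\nu}-\nabla_\mu\nabla_\nu f'(R)+\square f'(R)\,g_{\mu\nu}=\kappa T_{\mu\nu};$$ for a metric whose Ricci scalar is the constant $k$ the derivative terms vanish and these equations reduce to $f'(k)R_{\mu\nu}-\tfrac12 f(k)g_{\mu\nu}=\kappa T_{\mu\nu}$. A vacuum solution is one with $T_{\mu\nu}=0$. *)

(* Spacetime tensors are written in a local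
   coordinate chart U (an open, nonempty subset of R^4); components are
   4x4 matrices indexed by 'I_4 (index 0 = time coordinate). *)
From HB Require Import structures.
From mathcomp Require Import all_boot all_order all_algebra.
From mathcomp Require Import all_classical all_reals all_analysis.
Set Implicit Arguments. Unset Strict Implicit. Unset Printing Implicit Defensive.
Import Order.TTheory GRing.Theory Num.Theory.
Import numFieldNormedType.Exports.
Local Open Scope classical_set_scope.
Local Open Scope ring_scope.

Section Geom.
Variable R : realType.

Definition pd (h : 'rV[R]_4 -> R) (i : 'I_4) (x : 'rV[R]_4) : R :=
  derive h x (delta_mx 0 i).

Definition gcomp (g : 'rV[R]_4 -> 'M[R]_4) (i j : 'I_4) : 'rV[R]_4 -> R :=
  fun y => g y i j.

Definition ginv (g : 'rV[R]_4 -> 'M[R]_4) (x : 'rV[R]_4) : 'M[R]_4 :=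
  invmx (g x).

Definition christoffel (g : 'rV[R]_4 -> 'M[R]_4) (a b c : 'I_4)
    (x : 'rV[R]_4) : R :=
  2^-1 * \sum_(d < 4) ginv g x a d *
    (pd (gcomp g d c) b x + pd (gcomp g d b) c x - pd (gcomp g b c) d x).

Definition ricci (g : 'rV[R]_4 -> 'M[R]_4) (x : 'rV[R]_4) : 'M[R]_4 :=
  \matrix_(b < 4, d < 4)
    (\sum_(a < 4) (pd (christoffel g a b d) a x - pd (christoffel g a a b) d x)
     + \sum_(a < 4) \sum_(e < 4)
         (christoffel g a a e x * christoffel g e b d x
          - christoffel g a d e x * christoffel g e a b x)).

Definition ricci_scalar (g : 'rV[R]_4 -> 'M[R]_4) (x : 'rV[R]_4) : R :=
  \tr (ginv g x *m ricci g x).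

Definition minkowski : 'M[R]_4 :=
  diag_mx (\row_(i < 4) (if i == 0 then -1 else 1)).

Definition is_spacetime (U : set 'rV[R]_4) (g : 'rV[R]_4 -> 'M[R]_4) : Prop :=
  open U /\ U !=set0 /\
  (forall x, U x ->
     (g x)^T = g x /\
     (exists P : 'M[R]_4, P \in unitmx /\ P^T *m g x *m P = minkowski) /\
     (forall i j : 'I_4, differentiable (gcomp g i j) x) /\
     (forall i j l : 'I_4, differentiable (pd (gcomp g i j) l) x)).

Definition einstein_sol (U : set 'rV[R]_4) (g T : 'rV[R]_4 -> 'M[R]_4)
    (kappa Lambda : R) : Prop :=
  forall x, U x ->
    ricci g x - (2^-1 * ricci_scalar g x) *: g x + Lambda *: g x
    = kappa *: T x.

(* f(R) field equations for a metric of constant Ricci scalar k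
   (derivative terms vanish, see context) *)
Definition fR_sol (U : set 'rV[R]_4) (g T : 'rV[R]_4 -> 'M[R]_4)
    (kappa : R) (f : R -> R) (k : R) : Prop :=
  forall x, U x ->
    derive1 f k *: ricci g x - (2^-1 * f k) *: g x = kappa *: T x.

Definition kappa_of (G c : R) : R := 8 * pi * G / c ^+ 4.

End Geom.

From Pilot Require Import Defs.
From HB Require Import structures.
From mathcomp Require Import all_boot all_order all_algebra.
From mathcomp Require Import all_classical all_reals all_analysis.
From mathcomp Require Import lra.
Import Order.TTheory GRing.Theory Num.Theory.
Import numFieldNormedType.Exports.
Local Open Scope classical_set_scope.
Local Open Scope ring_scope.

(* With constant Ricci scalar k, Einstein's equations express the Ricci tensor
   as kappa T + (k/2 - Lambda) g.  Substituting this into the f(R) equations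
   gives (i) by pure linear algebra.  When f'(k) = 0 the f(R) equations say
   that kappa T, hence also the Ricci tensor, is proportional to g; taking the
   trace with g^{-1} forces the factor of proportionality of the Ricci tensor
   to be k/4, which pins down f(k) = (k - 4 Lambda)/2 for (ii).  Conversely,
   in both situations of (iii) the Ricci tensor is proportional to g, hence
   equal to (k/4) g, which is exactly the f(R) equation when f'(k) = 0. *)

Section ConstantScalarEinstein.
Context {R : fieldType} {V : lmodType R}.
Context {ric g t : V} {kappa Lambda k : R}.
Hypothesis einstein : ric - (2^-1 * k) *: g + Lambda *: g = kappa *: t.

Lemma einstein_ricciE : ric = kappa *: t + (k / 2 - Lambda) *: g.
Proof.
by rewrite -einstein scalerBl addrACA subrr addr0 mulrC subrK.
Qed.

Lemma fR_residualE (d F : R) :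
  d *: ric - (2^-1 * F) *: g - kappa *: t
  = ((k / 2 - Lambda) * d - 2^-1 * F) *: g + ((d - 1) * kappa) *: t.
Proof.
rewrite einstein_ricciE scalerDr !scalerA [(d - 1) * _]mulrBl mul1r scalerBl.
rewrite -!addrA addrCA; congr (_ + _); first by rewrite mulrC.
by rewrite scalerBl addrCA.
Qed.

Lemma fR_stationary_iff (F : R) :
  0 *: ric - (2^-1 * F) *: g = kappa *: t <-> ric = (k / 2 - Lambda - F / 2) *: g.
Proof.
rewrite scale0r sub0r einstein_ricciE [(_ - F / 2) *: g]scalerBl (mulrC F).
by rewrite addrC; split=> [<- | /addrI <-].
Qed.

End ConstantScalarEinstein.

Lemma det_minkowski_neq0 (R : realType) : \det (Defs.minkowski R) != 0.
Proof.
rewrite det_diag; apply/prodf_neq0 => i _; rewrite mxE.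
by case: (i == 0); rewrite ?oppr_eq0 oner_eq0.
Qed.

Lemma spacetime_unitmx {R : realType} {U : set 'rV[R]_4} {g x} :
  is_spacetime U g -> U x -> g x \in unitmx.
Proof.
move=> [_ [_ Hg]] Ux; have [_ [[P [_ gP]] _]] := Hg x Ux.
rewrite unitmxE unitfE; move: (det_minkowski_neq0 R); rewrite -gP !det_mulmx.
by apply: contra => /eqP ->; rewrite mulr0 mul0r.
Qed.

Lemma proportional_ricci_factor {R : realType} {U : set 'rV[R]_4} {g x} {a : R} :
  is_spacetime U g -> U x -> ricci g x = a *: g x -> a = ricci_scalar g x / 4.
Proof.
move=> Hg Ux ricE; rewrite /ricci_scalar ricE -scalemxAr mxtraceZ.
rewrite /ginv (mulVmx (spacetime_unitmx Hg Ux)) mxtrace1.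
by rewrite mulfK ?pnatr_eq0.
Qed.

Theorem mainTheorem1 (R : realType) (U : set 'rV[R]_4)
    (g T : 'rV[R]_4 -> 'M[R]_4) (G c Lambda k : R) (f : R -> R) :
  0 < G -> 0 < c ->
  is_spacetime U g ->
  einstein_sol U g T (kappa_of G c) Lambda ->
  (forall x, U x -> ricci_scalar g x = k) ->
  (forall r : R, derivable f r 1) ->
  (* (i) *)
  (derive1 f k != 0 ->
     (fR_sol U g T (kappa_of G c) f k <->
      (forall x, U x ->
         ((k / 2 - Lambda) * derive1 f k - 2^-1 * f k) *: g x
         + ((derive1 f k - 1) * kappa_of G c) *: T x = 0)))
  /\
  (* (ii) *)
  (derive1 f k = 0 -> f k != (k - 4 * Lambda) / 2 ->
     ~ fR_sol U g T (kappa_of G c) f k)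
  /\
  (* (iii) *)
  (derive1 f k = 0 -> f k = (k - 4 * Lambda) / 2 ->
     ((forall x, U x -> ricci g x = 0) \/ (forall x, U x -> T x = 0)) ->
     fR_sol U g T (kappa_of G c) f k).
Proof.
move=> _ _ Hg HE Hk _.
have {}HE x : U x -> ricci g x - (2^-1 * k) *: g x + Lambda *: g x
                     = kappa_of G c *: T x.
  by move=> Ux; rewrite -(Hk x Ux) HE.
split; [move=> _; split=> H x Ux | split].
- by rewrite -(fR_residualE (HE x Ux)) (H x Ux) subrr.
- by apply/eqP; rewrite -subr_eq0 (fR_residualE (HE x Ux)) (H x Ux).
- move=> d0 /eqP Fne HfR; have [_ [[x Ux] _]] := Hg.
  have := HfR x Ux; rewrite d0 (fR_stationary_iff (HE x Ux)).
  move/(proportional_ricci_factor Hg Ux); rewrite Hk // => factor_k.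
  by apply: Fne; lra.
- move=> d0 FE Hcase x Ux; rewrite d0 (fR_stationary_iff (HE x Ux)).
  have [a ricE] : exists a, ricci g x = a *: g x.
    case: Hcase => [ric0|T0]; first by exists 0; rewrite ric0 // scale0r.
    exists (k / 2 - Lambda).
    by rewrite (einstein_ricciE (HE x Ux)) T0 // scaler0 add0r.
  rewrite ricE (proportional_ricci_factor Hg Ux ricE) Hk // FE.
  by congr (_ *: _); lra.
Qed.
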